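(* Let $A>0$, $R>0$, $\sigma\in\mathbb{R}$, and let $\lambda_1$ be the first eigenvalue of the problem $$u''+2Au'+\lambda u=0 \text{ on }[0,R],\qquad u'(0)=0,\qquad u'(R)=-\sigma u(R).$$ (a) For all $R>0$: $\lambda_1\geq2\sigma A-\sigma^2$ if $0\le\sigma\le A$, and $\lambda_1\ge A^2$ if $\sigma\ge A$. (b) If $\sigma<0$, then for all $R>0$, $\lambda_1\leq-\sigma^2+2A\sigma$. (c) If $\sigma>A$, there are positive constants $R_0,c_0$ depending only on $A$ and $\sigma$ such that for all $R\ge R_0$, $\lambda_1\geq A^2+\frac{\pi^2}{R^2}-\frac{c_0}{R^3}$.
   Context: The problem is the Sturm–Liouville eigenvalue problem for $-u''-2Au'$ on $L^2([0,R],e^{2Ax}dx)$ with the stated boundary conditions; its spectrum is discrete and $\lambda_1$ is the smallest eigenvalue. *)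

From Stdlib Require Import Reals Lra.
From Coquelicot Require Import Coquelicot.
Open Scope R_scope.

(* Since u1 is only constrained on [0,Rad], the
   derivatives at the endpoints are effectively one-sided. *)
Definition is_eigenvalue (A Rad sigma lam : R) : Prop :=
  exists u u1 u2 : R -> R,
    (forall x, 0 <= x <= Rad -> is_derive u x (u1 x)) /\
    (forall x, 0 <= x <= Rad -> is_derive u1 x (u2 x)) /\
    (forall x, 0 <= x <= Rad -> u2 x + 2 * A * u1 x + lam * u x = 0) /\
    u1 0 = 0 /\
    u1 Rad = - sigma * u Rad /\
    (exists x, 0 <= x <= Rad /\ u x <> 0).

Definition is_first_eigenvalue (A Rad sigma lam1 : R) : Prop :=
  is_eigenvalue A Rad sigma lam1 /\
  (forall mu, is_eigenvalue A Rad sigma mu -> lam1 <= mu).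

(* Solutions of u'' + 2Au' + lam u = 0 are determined by their Cauchy data at 0,
   since the energy e^(-Cx) (u'^2 + u^2) is nonincreasing for C large.  Hence
   every eigenfunction is a multiple of the explicit solution f with f'(0) = 0,
   and lam is an eigenvalue iff f'(R) + sigma f(R) = 0.  Writing lam = A^2 - k^2,
   A^2 or A^2 + n^2, this secular equation reads
     (k + A)(k - A + sigma) e^(2kR) = (k - A)(k + A - sigma),
     sigma + A R (sigma - A) = 0,
     sigma n cos(nR) = (n^2 + A^2 - sigma A) sin(nR).
   For sigma >= 0 the first one has no root k > A - sigma, which gives (a).  For
   sigma < 0 it has a root in [A - sigma, A - sigma + 1/R] by the intermediate
   value theorem, which gives (b).  For sigma > A only the third one can hold;
   with m = A (sigma - A) and 2 n^2 <= m, the angle p = pi - nR satisfies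
   (m/2) (p/3) <= (m - n^2) sin p = sigma n cos p <= sigma n, so
   pi <= n (R + 6 sigma/m), which gives (c). *)

From Stdlib Require Import Reals Lra Psatz.
From Coquelicot Require Import Coquelicot.
Open Scope R_scope.

Lemma two_mul_le_abs_sum_sq s a b : 2 * s * a * b <= Rabs s * (a * a + b * b).
Proof.
  assert (Hs1 : s <= Rabs s) by apply Rle_abs.
  assert (Hs2 : - s <= Rabs s) by (rewrite <- Rabs_Ropp; apply Rle_abs).
  assert (0 <= (Rabs s - s) * ((a + b) * (a + b)))
    by (apply Rmult_le_pos; [lra | apply Rle_0_sqr]).
  assert (0 <= (Rabs s + s) * ((a - b) * (a - b)))
    by (apply Rmult_le_pos; [lra | apply Rle_0_sqr]).
  lra.
Qed.

Section Solutions.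

Variables A lam Rad : R.

Definition solves (u u1 u2 : R -> R) : Prop :=
  (forall x, 0 <= x <= Rad -> is_derive u x (u1 x)) /\
  (forall x, 0 <= x <= Rad -> is_derive u1 x (u2 x)) /\
  (forall x, 0 <= x <= Rad -> u2 x + 2 * A * u1 x + lam * u x = 0).

Lemma solves_lincomb a b u u1 u2 v v1 v2 :
  solves u u1 u2 -> solves v v1 v2 ->
  solves (fun x => a * u x + b * v x) (fun x => a * u1 x + b * v1 x)
         (fun x => a * u2 x + b * v2 x).
Proof.
  intros (Hu & Hu1 & Eu) (Hv & Hv1 & Ev).
  split; [|split]; intros x Hx.
  - apply (is_derive_plus (fun x => a * u x)); apply is_derive_scal; auto.
  - apply (is_derive_plus (fun x => a * u1 x)); apply is_derive_scal; auto.
  - specialize (Eu x Hx). specialize (Ev x Hx). nra.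
Qed.

Lemma le_at_0_of_derive_nonpos (F dF : R -> R) :
  (forall x, 0 <= x <= Rad -> is_derive F x (dF x)) ->
  (forall x, 0 <= x <= Rad -> dF x <= 0) ->
  forall x, 0 <= x <= Rad -> F x <= F 0.
Proof.
  intros HF HdF x Hx.
  destruct (MVT_gen F 0 x dF) as [c [Hc HFc]];
    rewrite ?Rmin_left, ?Rmax_right in * by lra.
  - intros y Hy. apply HF. lra.
  - intros y Hy. apply continuity_pt_filterlim.
    apply (ex_derive_continuous (K := R_AbsRing) (V := R_NormedModule)).
    eexists. apply HF. lra.
  - assert (dF c <= 0) by (apply HdF; lra). nra.
Qed.

Lemma solves_zero_data v v1 v2 :
  solves v v1 v2 -> v 0 = 0 -> v1 0 = 0 ->
  forall x, 0 <= x <= Rad -> v x = 0 /\ v1 x = 0.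
Proof.
  intros (Hv & Hv1 & Ev) V0 V10 x Hx.
  set (C := 4 * Rabs A + Rabs (1 - lam)).
  set (E := fun y => exp (- C * y) * (v1 y * v1 y + v y * v y)).
  set (dE := fun y => exp (- C * y) *
    (- C * (v1 y * v1 y + v y * v y) + 2 * v1 y * v2 y + 2 * v y * v1 y)).
  assert (HE : forall y, 0 <= y <= Rad -> is_derive E y (dE y)).
  { intros y Hy. unfold E, dE. auto_derive.
    - repeat split; eexists; first [apply Hv1 | apply Hv]; exact Hy.
    - replace (Derive (fun x => v1 x) y) with (v2 y)
        by (symmetry; apply is_derive_unique, Hv1, Hy).
      replace (Derive (fun x => v x) y) with (v1 y)
        by (symmetry; apply is_derive_unique, Hv, Hy).
      ring. }
  assert (HdE : forall y, 0 <= y <= Rad -> dE y <= 0).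
  { intros y Hy. unfold dE.
    apply Rmult_le_0_l; [apply Rlt_le, exp_pos|].
    replace (v2 y) with (- 2 * A * v1 y - lam * v y) by (specialize (Ev y Hy); lra).
    assert (HA := two_mul_le_abs_sum_sq (- A) (v1 y) (v1 y)).
    assert (Hlam := two_mul_le_abs_sum_sq (1 - lam) (v y) (v1 y)).
    rewrite Rabs_Ropp in HA.
    assert (0 <= Rabs A * (v y * v y)) by (apply Rmult_le_pos; [apply Rabs_pos | nra]).
    unfold C. lra. }
  assert (HEx := le_at_0_of_derive_nonpos E dE HE HdE x Hx).
  unfold E in HEx. rewrite V0, V10, Rmult_0_r in HEx.
  assert (Hsq : v1 x * v1 x + v x * v x <= 0).
  { apply (Rmult_le_reg_l (exp (- C * x))); [apply exp_pos | lra]. }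
  split; nra.
Qed.

Lemma is_eigenvalue_iff sigma f f1 f2 :
  0 <= Rad -> solves f f1 f2 -> f1 0 = 0 -> f 0 <> 0 ->
  is_eigenvalue A Rad sigma lam <-> f1 Rad + sigma * f Rad = 0.
Proof.
  intros HRad Hf F10 F0. split.
  - intros (u & u1 & u2 & Hu & Hu1 & Eu & U10 & U1Rad & x0 & Hx0 & Ux0).
    assert (Hsol := solves_lincomb (f 0) (- u 0) _ _ _ _ _ _
      (conj Hu (conj Hu1 Eu)) Hf).
    assert (Hzero := solves_zero_data _ _ _ Hsol).
    simpl in Hzero.
    assert (U0 : u 0 <> 0).
    { intros U0. apply Ux0.
      destruct (Hzero ltac:(ring) ltac:(rewrite U10, F10; ring) x0 Hx0) as [Hx _].
      rewrite U0 in Hx. apply (Rmult_eq_reg_l (f 0)); [lra | exact F0]. }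
    destruct (Hzero ltac:(ring) ltac:(rewrite U10, F10; ring) Rad ltac:(lra))
      as [HuR Hu1R].
    rewrite U1Rad in Hu1R.
    assert (sigma * (f 0 * u Rad + - u 0 * f Rad) = 0) by (rewrite HuR; ring).
    apply (Rmult_eq_reg_l (- u 0)); [lra | intro; apply U0; lra].
  - intros Hchar. exists f, f1, f2.
    destruct Hf as (Hf & Hf1 & Ef).
    split; [exact Hf | split; [exact Hf1 | split; [exact Ef | split; [exact F10 |]]]].
    split; [lra |].
    exists 0. split; [lra | exact F0].
Qed.

End Solutions.

Definition hyp_sol (A k x : R) : R :=
  (k + A) * exp ((k - A) * x) + (k - A) * exp (- (k + A) * x).

Definition crit_sol (A x : R) : R := exp (- A * x) * (1 + A * x).

Definition osc_sol (A n x : R) : R :=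
  exp (- A * x) * (n * cos (n * x) + A * sin (n * x)).

Lemma solves_hyp_sol A k Rad :
  solves A (A ^ 2 - k ^ 2) Rad (hyp_sol A k)
    (fun x => (k ^ 2 - A ^ 2) * (exp ((k - A) * x) - exp (- (k + A) * x)))
    (fun x => (k ^ 2 - A ^ 2) *
              ((k - A) * exp ((k - A) * x) + (k + A) * exp (- (k + A) * x))).
Proof.
  unfold hyp_sol; split; [|split]; intros x _; [auto_derive; auto; ring .. | ring].
Qed.

Lemma solves_crit_sol A Rad :
  solves A (A ^ 2) Rad (crit_sol A)
    (fun x => - A ^ 2 * x * exp (- A * x))
    (fun x => A ^ 2 * exp (- A * x) * (A * x - 1)).
Proof.
  unfold crit_sol; split; [|split]; intros x _; [auto_derive; auto; ring .. | ring].
Qed.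

Lemma solves_osc_sol A n Rad :
  solves A (A ^ 2 + n ^ 2) Rad (osc_sol A n)
    (fun x => - (n ^ 2 + A ^ 2) * exp (- A * x) * sin (n * x))
    (fun x => - (n ^ 2 + A ^ 2) * exp (- A * x) * (n * cos (n * x) - A * sin (n * x))).
Proof.
  unfold osc_sol; split; [|split]; intros x _; [auto_derive; auto; ring .. | ring].
Qed.

Lemma eq0_iff_of_pos_factor x e a b : 0 < e -> x = e * (a - b) -> (x = 0 <-> a = b).
Proof.
  intros He ->. split; intros H.
  - destruct (Rmult_integral _ _ H); lra.
  - rewrite H. ring.
Qed.

Lemma is_eigenvalue_hyp_iff A sigma Rad k : 0 <= Rad -> 0 < k ->
  is_eigenvalue A Rad sigma (A ^ 2 - k ^ 2) <->
  (k + A) * (k - A + sigma) * exp (2 * k * Rad) = (k - A) * (k + A - sigma).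
Proof.
  intros HRad Hk.
  rewrite (is_eigenvalue_iff _ _ _ sigma _ _ _ HRad (solves_hyp_sol A k Rad));
    unfold hyp_sol; rewrite ?Rmult_0_r, ?exp_0; [| ring | intro; lra].
  replace (exp ((k - A) * Rad)) with (exp (2 * k * Rad) * exp (- (k + A) * Rad))
    by (rewrite <- exp_plus; f_equal; ring).
  apply (eq0_iff_of_pos_factor _ (exp (- (k + A) * Rad))); [apply exp_pos | ring].
Qed.

Lemma is_eigenvalue_crit_iff A sigma Rad : 0 <= Rad ->
  is_eigenvalue A Rad sigma (A ^ 2) <-> sigma + A * Rad * (sigma - A) = 0.
Proof.
  intros HRad.
  rewrite (is_eigenvalue_iff _ _ _ sigma _ _ _ HRad (solves_crit_sol A Rad));
    unfold crit_sol; rewrite ?Rmult_0_r, ?exp_0; [| ring | intro; lra].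
  apply (eq0_iff_of_pos_factor _ (exp (- A * Rad))); [apply exp_pos | ring].
Qed.

Lemma is_eigenvalue_osc_iff A sigma Rad n : 0 <= Rad -> 0 < n ->
  is_eigenvalue A Rad sigma (A ^ 2 + n ^ 2) <->
  sigma * n * cos (n * Rad) = (n ^ 2 + A ^ 2 - sigma * A) * sin (n * Rad).
Proof.
  intros HRad Hn.
  rewrite (is_eigenvalue_iff _ _ _ sigma _ _ _ HRad (solves_osc_sol A n Rad));
    unfold osc_sol; rewrite ?Rmult_0_r, ?exp_0, ?cos_0, ?sin_0; [| ring | intro; lra].
  apply (eq0_iff_of_pos_factor _ (exp (- A * Rad))); [apply exp_pos | ring].
Qed.

Lemma eigenvalue_below_sq A sigma Rad lam :
  0 < A -> 0 <= sigma -> 0 < Rad -> is_eigenvalue A Rad sigma lam -> lam < A ^ 2 ->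
  sigma < A /\ A ^ 2 - (A - sigma) ^ 2 <= lam.
Proof.
  intros HA Hs HRad Heig Hlam.
  set (k := sqrt (A ^ 2 - lam)).
  assert (Hk : 0 < k) by (apply sqrt_lt_R0; lra).
  assert (Hkk : k ^ 2 = A ^ 2 - lam) by (unfold k; rewrite pow2_sqrt; lra).
  replace lam with (A ^ 2 - k ^ 2) in Heig by lra.
  apply is_eigenvalue_hyp_iff in Heig; [| lra | exact Hk].
  assert (HkB : k <= A - sigma).
  { apply Rnot_lt_le. intros HkB.
    assert (HE : 1 < exp (2 * k * Rad)).
    { rewrite <- exp_0. apply exp_increasing. nra. }
    assert (0 < (k + A) * (k - A + sigma)) by nra.
    nra. }
  split; nra.
Qed.

Lemma exists_eigenvalue_le A sigma Rad :
  0 < A -> sigma < 0 -> 0 < Rad ->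
  exists lam, is_eigenvalue A Rad sigma lam /\ lam <= A ^ 2 - (A - sigma) ^ 2.
Proof.
  intros HA Hs HRad.
  set (B := A - sigma).
  set (chi := fun k => (k + A) * (k - B) * exp (2 * k * Rad) - (k - A) * (k + B)).
  assert (Hchi0 : chi B < 0) by (unfold chi, B; nra).
  assert (Hchi1 : 0 < chi (B + / Rad)).
  { unfold chi. set (k := B + / Rad).
    assert (Hr : 0 < / Rad) by (apply Rinv_0_lt_compat; lra).
    assert (HE : 2 * k * Rad < exp (2 * k * Rad)).
    { assert (1 + 2 * k * Rad < exp (2 * k * Rad)) by (apply exp_ineq1; unfold k, B; nra).
      lra. }
    replace (k - B) with (/ Rad) by (unfold k; ring).
    assert (H2k : 2 * k < / Rad * exp (2 * k * Rad)).
    { assert (/ Rad * (2 * k * Rad) = 2 * k) by (field; lra).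
      assert (/ Rad * (2 * k * Rad) < / Rad * exp (2 * k * Rad))
        by (apply Rmult_lt_compat_l; lra).
      lra. }
    assert ((k + A) * (2 * k) < (k + A) * (/ Rad * exp (2 * k * Rad)))
      by (apply Rmult_lt_compat_l; [unfold k, B; lra | exact H2k]).
    assert (HBk : A < B < k) by (unfold k, B; lra).
    assert ((k - A) * (k + B) < (k + A) * (k + B)) by (apply Rmult_lt_compat_r; lra).
    assert ((k + A) * (k + B) < (k + A) * (2 * k)) by (apply Rmult_lt_compat_l; lra).
    lra. }
  assert (Hcont : continuity chi) by (unfold chi; reg).
  destruct (IVT chi B (B + / Rad) Hcont) as [k [Hk Hchik]];
    [apply Rinv_0_lt_compat in HRad; lra | exact Hchi0 | exact Hchi1 |].
  exists (A ^ 2 - k ^ 2). split.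
  - apply is_eigenvalue_hyp_iff; [lra | unfold B in Hk; lra |].
    unfold chi, B in Hchik. lra.
  - assert (B ^ 2 <= k ^ 2) by (apply pow_incr; unfold B in *; lra).
    lra.
Qed.

Lemma sin_ge_third a : 0 <= a <= 2 -> a / 3 <= sin a.
Proof.
  intros Ha.
  destruct (sin_bound a 0) as [Hlb _]; [lra | assert (H := PI2_3_2); lra |].
  replace (sin_approx a (2 * 0 + 1)) with (a - a ^ 3 / 6) in Hlb
    by (unfold sin_approx, sin_term; simpl; field).
  assert (a ^ 3 <= 4 * a) by (simpl; nra).
  lra.
Qed.

Lemma eigenvalue_gt_sq A sigma Rad lam :
  0 < A -> A < sigma -> 0 < Rad -> is_eigenvalue A Rad sigma lam -> A ^ 2 < lam.
Proof.
  intros HA Hs HRad Heig.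
  destruct (Rtotal_order lam (A ^ 2)) as [Hlt | [Heq | Hgt]]; [| subst lam | exact Hgt].
  - destruct (eigenvalue_below_sq A sigma Rad lam HA ltac:(lra) HRad Heig Hlt); lra.
  - apply is_eigenvalue_crit_iff in Heig; [| lra].
    assert (0 < A * Rad * (sigma - A)) by (repeat apply Rmult_lt_0_compat; lra).
    lra.
Qed.

Lemma secular_root_lb sigma m n Rad :
  0 < sigma -> 0 < m -> 0 < n -> 0 < Rad -> 2 * n ^ 2 <= m ->
  sigma * n * cos (n * Rad) = (n ^ 2 - m) * sin (n * Rad) ->
  PI <= n * (Rad + 6 * sigma / m).
Proof.
  intros Hs Hm Hn HRad Hnm Hsec.
  assert (Hc : 0 < 6 * sigma / m) by (apply Rdiv_lt_0_compat; lra).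
  destruct (Rle_lt_dec PI (n * Rad)) as [Hbig | Hsmall]; [nra |].
  set (t := n * Rad) in *.
  assert (Hsin : 0 < sin t) by (apply sin_gt_0; [unfold t; nra | exact Hsmall]).
  assert (Hsn : 0 < sigma * n) by nra.
  assert (Hcos : cos t < 0).
  { assert (0 < (m - n ^ 2) * sin t) by (apply Rmult_lt_0_compat; nra).
    apply Rnot_le_lt. intros Hc0.
    assert (0 <= sigma * n * cos t) by (apply Rmult_le_pos; lra). lra. }
  assert (Ht : PI / 2 < t).
  { apply Rnot_le_lt. intros Ht.
    assert (0 <= cos t) by (apply cos_ge_0; unfold t in *; nra). lra. }
  set (p := PI - t).
  assert (Hsp : sin p = sin t) by apply sin_PI_x.
  assert (Hcp : cos p = - cos t) by apply Rtrigo_facts.cos_pi_minus.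
  assert (Hp : p / 3 <= sin p) by (apply sin_ge_third; assert (H := PI_4); unfold p; lra).
  assert (Hsecp : (m - n ^ 2) * sin p <= sigma * n).
  { replace ((m - n ^ 2) * sin p) with (sigma * n * cos p) by (rewrite Hsp, Hcp; lra).
    assert (cos p <= 1) by apply COS_bound.
    nra. }
  assert (Hmp : m * p <= 6 * sigma * n).
  { assert (m / 2 * (p / 3) <= (m - n ^ 2) * sin p)
      by (apply Rmult_le_compat; [lra | unfold p; lra | nra | exact Hp]).
    lra. }
  assert (p <= 6 * sigma / m * n).
  { apply (Rmult_le_reg_l m); [exact Hm |].
    replace (m * (6 * sigma / m * n)) with (6 * sigma * n) by (field; lra). lra. }
  unfold p, t in *. lra.
Qed.

Lemma sq_inv_shift_lb a c n Rad :
  0 <= a -> 0 < c -> 0 < n -> 0 < Rad -> a <= n * (Rad + c) ->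
  a ^ 2 / Rad ^ 2 - 2 * c * a ^ 2 / Rad ^ 3 <= n ^ 2.
Proof.
  intros Ha Hc Hn HRad Hanc.
  assert (HR3 : 0 < Rad ^ 3) by (apply pow_lt; lra).
  apply (Rmult_le_reg_r (Rad ^ 3) _ _ HR3).
  replace ((a ^ 2 / Rad ^ 2 - 2 * c * a ^ 2 / Rad ^ 3) * Rad ^ 3)
    with (a ^ 2 * (Rad - 2 * c)) by (field; lra).
  destruct (Rle_lt_dec Rad (2 * c)) as [Hle | Hlt].
  - assert (0 <= n ^ 2 * Rad ^ 3) by (apply Rmult_le_pos; nra).
    nra.
  - assert (Ha2 : a ^ 2 <= n ^ 2 * (Rad + c) ^ 2)
      by (rewrite <- Rpow_mult_distr; apply pow_incr; lra).
    assert ((Rad + c) ^ 2 * (Rad - 2 * c) <= Rad ^ 3) by nra.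
    nra.
Qed.

Lemma eigenvalue_large_radius_lb A sigma :
  0 < A -> A < sigma ->
  exists R0 c0, 0 < R0 /\ 0 < c0 /\
    forall Rad lam, R0 <= Rad -> is_eigenvalue A Rad sigma lam ->
      A ^ 2 + PI ^ 2 / Rad ^ 2 - c0 / Rad ^ 3 <= lam.
Proof.
  intros HA Hs.
  set (m := A * (sigma - A)).
  assert (Hm : 0 < m) by (apply Rmult_lt_0_compat; lra).
  set (c := 6 * sigma / m).
  assert (Hc : 0 < c) by (apply Rdiv_lt_0_compat; lra).
  assert (HPI := PI_RGT_0).
  assert (HPI2 : 0 < PI ^ 2) by (apply pow_lt; exact HPI).
  assert (Him : 0 < / m) by (apply Rinv_0_lt_compat; exact Hm).
  set (R0 := PI * (1 + / m)).
  assert (HR0 : 0 < R0) by (apply Rmult_lt_0_compat; lra).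
  exists R0, (2 * c * PI ^ 2).
  split; [exact HR0 | split; [apply Rmult_lt_0_compat; lra |]].
  intros Rad lam HRadR0 Heig.
  assert (HRad : 0 < Rad) by lra.
  assert (Hc0 : 0 < 2 * c * PI ^ 2 / Rad ^ 3)
    by (apply Rdiv_lt_0_compat; [apply Rmult_lt_0_compat | apply pow_lt]; lra).
  assert (HA2 := eigenvalue_gt_sq A sigma Rad lam HA Hs HRad Heig).
  set (n := sqrt (lam - A ^ 2)).
  assert (Hn : 0 < n) by (apply sqrt_lt_R0; lra).
  assert (Hnn : n ^ 2 = lam - A ^ 2) by (unfold n; rewrite pow2_sqrt; lra).
  replace lam with (A ^ 2 + n ^ 2) in Heig |- * by lra.
  apply is_eigenvalue_osc_iff in Heig; [| lra | exact Hn].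
  destruct (Rle_lt_dec (PI ^ 2 / Rad ^ 2) (n ^ 2)) as [Hbig | Hsmall]; [lra |].
  assert (Hnm : 2 * n ^ 2 <= m).
  { assert (Hsq : n ^ 2 * Rad ^ 2 < PI ^ 2).
    { apply (Rmult_lt_compat_r (Rad ^ 2)) in Hsmall; [| nra].
      replace (PI ^ 2 / Rad ^ 2 * Rad ^ 2) with (PI ^ 2) in Hsmall by (field; lra).
      exact Hsmall. }
    assert (HmR0 : 2 * PI ^ 2 <= m * R0 ^ 2).
    { replace (m * R0 ^ 2) with (PI ^ 2 * (m + 2 + / m)) by (unfold R0; field; lra).
      nra. }
    assert (R0 ^ 2 <= Rad ^ 2) by (apply pow_incr; lra).
    nra. }
  assert (Hroot := secular_root_lb sigma m n Rad ltac:(lra) Hm Hn HRad Hnm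
    ltac:(unfold m; rewrite Heig; ring)).
  assert (Hlb := sq_inv_shift_lb PI c n Rad ltac:(lra) Hc Hn HRad Hroot).
  lra.
Qed.

Theorem lemma6p1 (A sigma : R) (hA : 0 < A) :
  (* (a) *)
  (forall Rad lam1, 0 < Rad -> is_first_eigenvalue A Rad sigma lam1 ->
     (0 <= sigma <= A -> 2 * sigma * A - sigma ^ 2 <= lam1) /\
     (A <= sigma -> A ^ 2 <= lam1)) /\
  (* (b) *)
  (sigma < 0 ->
     forall Rad lam1, 0 < Rad -> is_first_eigenvalue A Rad sigma lam1 ->
       lam1 <= - sigma ^ 2 + 2 * A * sigma) /\
  (* (c) *)
  (A < sigma ->
     exists R0 c0, 0 < R0 /\ 0 < c0 /\
       forall Rad lam1, R0 <= Rad -> is_first_eigenvalue A Rad sigma lam1 ->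
         A ^ 2 + PI ^ 2 / Rad ^ 2 - c0 / Rad ^ 3 <= lam1).
Proof.
  split; [| split].
  - intros Rad lam1 HRad [Heig _].
    destruct (Rlt_le_dec lam1 (A ^ 2)) as [Hlt | Hge]; split; intros Hs.
    + destruct (eigenvalue_below_sq A sigma Rad lam1 hA ltac:(lra) HRad Heig Hlt); lra.
    + destruct (eigenvalue_below_sq A sigma Rad lam1 hA ltac:(lra) HRad Heig Hlt); lra.
    + nra.
    + exact Hge.
  - intros Hs Rad lam1 HRad [_ Hmin].
    destruct (exists_eigenvalue_le A sigma Rad hA Hs HRad) as [mu [Hmu Hle]].
    specialize (Hmin mu Hmu). lra.
  - intros Hs.
    destruct (eigenvalue_large_radius_lb A sigma hA Hs) as (R0 & c0 & HR0 & Hc0 & Hlb).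
    exists R0, c0. split; [exact HR0 | split; [exact Hc0 |]].
    intros Rad lam1 HRad [Heig _]. exact (Hlb Rad lam1 HRad Heig).
Qed.
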